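(* The $3$-uniform hypergraphs $O_R$ and $O_B$ are both opaque; i.e., the spectral ranking of $O_R$ differs from that of $\partial^*O_R$, and the spectral ranking of $O_B$ differs from that of $\partial^*O_B$. (Here $\partial^*O_R=\partial^*O_B$; in this multigraph the principal eigenvector takes equal values at $t$ and $b$, while the principal eigenvector $y$ of $O_R$ satisfies $y_t>y_b$.)
   Context: $O_R$ is the $3$-uniform hypergraph on vertex set $\{t,b,p,q,r,s,u\}$ with edges $\{t,p,q\},\{t,r,s\},\{b,q,r\},\{b,p,s\},\{u,p,q\}$; $O_B$ is the $3$-uniform hypergraph on the same vertex set with edges $\{t,p,r\},\{t,p,s\},\{b,p,q\},\{b,r,s\},\{u,p,q\}$. For a connected $k$-uniform hypergraph $H=([n],E)$, writing $x^e=\prod_{v\in e}x_v$, its principal eigenvector is the unique strictly positive $y$ with $\|y\|_k=1$ and $\rho\, y_i^{k-1}=\sum_{e\ni i}y^{e\setminus\{i\}}$ for all $i$, where $\rho=\max_{\|z\|_k^k=1}k\sum_{e\in E}z^e$. The clique-shadow $\partial^*H$ is the multigraph on the same vertices in which $\{u,v\}$ has multiplicity $\mu(uv)=|\{e\in E:u,v\in e\}|$; its principal eigenvector is the positive Perron eigenvector of its adjacency matrix (entries $\mu(uv)$), normalized to unit $2$-norm. The spectral ranking of a (hyper)graph is the ordering of its vertices by decreasing value of the principal eigenvector, tied vertices sharing a rank. A hypergraph is opaque if its spectral ranking differs from that of its clique-shadow. *)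

From HB Require Import structures.
From mathcomp Require Import all_boot all_order all_algebra.
From mathcomp Require Import reals.
Set Implicit Arguments. Unset Strict Implicit. Unset Printing Implicit Defensive.
Import Order.TTheory GRing.Theory Num.Theory.
Local Open Scope ring_scope.

Notation hypergraph n := (seq {set 'I_n}) (only parsing).

Section Spectral.
Variable R : realType.
Variables (n k : nat).

Definition monom (x : 'I_n -> R) (A : {set 'I_n}) : R := \prod_(v in A) x v.

Definition hform (E : hypergraph n) (z : 'I_n -> R) : R :=
  k%:R * \sum_(e <- E) monom z e.

Definition is_hspectral_radius (E : hypergraph n) (rho : R) : Prop :=
  (exists z : 'I_n -> R, \sum_i `|z i| ^+ k = 1 /\ hform E z = rho) /\
  (forall z : 'I_n -> R, \sum_i `|z i| ^+ k = 1 -> hform E z <= rho).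

Definition is_hyper_pev (E : hypergraph n) (y : 'I_n -> R) : Prop :=
  (forall i, 0 < y i) /\
  \sum_i y i ^+ k = 1 /\
  exists rho, is_hspectral_radius E rho /\
    forall i, rho * y i ^+ (k.-1) =
              \sum_(e <- E | i \in e) monom y (e :\ i).

(* multiplicity of the pair {u,v} (u <> v) in the clique-shadow; no loops *)
Definition shadow_mult (E : hypergraph n) (u v : 'I_n) : R :=
  if u == v then 0 else (count (fun e : {set 'I_n} => (u \in e) && (v \in e)) E)%:R.

Definition is_shadow_pev (E : hypergraph n) (z : 'I_n -> R) : Prop :=
  (forall i, 0 < z i) /\
  \sum_i z i ^+ 2 = 1 /\
  exists lambda : R, forall i,
    \sum_j shadow_mult E i j * z j = lambda * z i.

End Spectral.

(* Two vectors induce the same spectral ranking (ordering by decreasing value,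
   ties sharing a rank) iff they induce the same weak order on vertices. *)
Definition same_ranking (R : realType) (n : nat) (y z : 'I_n -> R) : Prop :=
  forall u v : 'I_n, (y u <= y v) = (z u <= z v).

Definition opaque (R : realType) (n k : nat) (E : hypergraph n) : Prop :=
  (exists y : 'I_n -> R, is_hyper_pev k E y) /\
  (exists z : 'I_n -> R, is_shadow_pev E z) /\
  (forall (y z : 'I_n -> R), is_hyper_pev k E y -> is_shadow_pev E z ->
     ~ same_ranking y z).

Definition vt : 'I_7 := @Ordinal 7 0 isT.
Definition vb : 'I_7 := @Ordinal 7 1 isT.
Definition vp : 'I_7 := @Ordinal 7 2 isT.
Definition vq : 'I_7 := @Ordinal 7 3 isT.
Definition vr : 'I_7 := @Ordinal 7 4 isT.
Definition vs : 'I_7 := @Ordinal 7 5 isT.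
Definition vu : 'I_7 := @Ordinal 7 6 isT.

Definition O_R : hypergraph 7 :=
  [:: [set vt; vp; vq]; [set vt; vr; vs]; [set vb; vq; vr];
      [set vb; vp; vs]; [set vu; vp; vq]].

Definition O_B : hypergraph 7 :=
  [:: [set vt; vp; vr]; [set vt; vp; vs]; [set vb; vp; vq];
      [set vb; vr; vs]; [set vu; vp; vq]].

From HB Require Import structures.
(* The analysis libraries are imported first so that finset and fingraph names
   (closed, subsetP, setIidPl, big_setID, ...) are not shadowed by their
   classical-set homonyms. *)
From mathcomp Require Import all_classical all_reals all_analysis.
From mathcomp Require Import all_boot all_order all_algebra reals.
From mathcomp Require Import ring lra.
Set Implicit Arguments. Unset Strict Implicit. Unset Printing Implicit Defensive.
Import Order.TTheory GRing.Theory Num.Theory.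
Import numFieldTopology.Exports.
Local Open Scope ring_scope.

(* Existence: for a connected k-uniform hypergraph, a maximizer y of the form
   F(z) = sum_e z^e on the nonnegative part of the unit k-sphere exists by
   compactness.  It is positive: if y vanishes on part S of an edge e but not on
   all of it, raising y by t on S gains at least t^#|S| * y^(e\S) in F while the
   k-norm only grows by #|S| t^k, and #|S| < k.  Fermat's rule at y then gives
   the eigen-equations.  The clique-shadow is the 2-uniform hypergraph of the
   pairs of the edges (with repetitions), so the same argument applies to it.

   Rankings: in the shadow of O_R, t and b have the same neighbourhood, hence
   equal entries.  The strict comparisons are certified with an explicit
   approximate eigenvector x: if M = max_i y_i / x_i is attained at m, then
   y <= M x, y_m = M x_m, and the eigen-equations, together with a lower bound
   on the eigenvalue obtained from x, propagate lower bounds y_j >= M c_j from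
   m until the wanted comparison follows. *)

Section Hypergraphs.
Variable n : nat.
Implicit Types (E : hypergraph n) (u v : 'I_n).

Definition uniform k E := all (fun e : {set 'I_n} => #|e| == k) E.

Definition hadj E : rel 'I_n :=
  fun u v => has (fun e : {set 'I_n} => (u \in e) && (v \in e)) E.

Definition hconnected E := [forall u, forall v, connect (hadj E) u v].

Lemma hadjC E : symmetric (hadj E).
Proof. by move=> u v; apply: eq_has => e; rewrite andbC. Qed.

Lemma hconnected_star E c : (forall u, connect (hadj E) c u) -> hconnected E.
Proof.
move=> c_conn; apply/forallP => u; apply/forallP => v.
by apply: connect_trans (c_conn v); rewrite (sym_connect_sym (hadjC E)).
Qed.

End Hypergraphs.

(* Unlike big_cons, the tail does not get duplicated into both branches of the if,
   which keeps the evaluation of sums over explicit lists linear. *)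
Lemma big_cons_if (R : nmodType) (I : Type) (x : I) (r : seq I) (P : pred I)
    (F : I -> R) :
  \sum_(j <- x :: r | P j) F j = (if P x then F x else 0) + \sum_(j <- r | P j) F j.
Proof. by rewrite big_cons; case: ifP; rewrite ?add0r. Qed.

Lemma ler_sum_seq_gap (R : realDomainType) (I : eqType) (s : seq I) (P : pred I)
    (F G : I -> R) x :
  x \in s -> P x -> (forall i, P i -> F i <= G i) ->
  \sum_(i <- s | P i) F i + (G x - F x) <= \sum_(i <- s | P i) G i.
Proof.
move=> xs Px FG; elim: s xs => // a s IH; rewrite inE !big_cons => /orP[/eqP <-|xs].
  rewrite Px; have : \sum_(i <- s | P i) F i <= \sum_(i <- s | P i) G i by apply: ler_sum.
  lra.
by case: ifP => Pa; have := IH xs; [have := FG a Pa; lra | lra].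
Qed.

Lemma le_mul_small (R : realFieldType) (D K : R) :
  (forall t, 0 < t <= 1 -> D <= t * K) -> D <= 0.
Proof.
move=> small; rewrite leNgt; apply/negP => D0.
have DK : D <= K by rewrite -[K]mul1r; apply: small; rewrite ltr01 lexx.
have K0 : 0 < K := lt_le_trans D0 DK.
have t_small : 0 < D / (K *+ 2) <= 1.
  rewrite divr_gt0 ?pmulrn_lgt0 //= ler_pdivrMr ?pmulrn_lgt0 // mul1r.
  by rewrite mulr2n; lra.
have := small _ t_small.
have -> : D / (K *+ 2) * K = D / 2 by field; rewrite gt_eqF.
lra.
Qed.

Section Monomials.
Variables (R : realType) (n : nat).
Implicit Types (x y z w : 'I_n -> R) (e S : {set 'I_n}) (E : hypergraph n).

Definition hpoly E z : R := \sum_(e <- E) monom z e.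

Definition hgrad E i z : R := \sum_(e <- E | i \in e) monom z (e :\ i).

Definition bump y S (t : R) : 'I_n -> R := fun v => y v + (if v \in S then t else 0).

Lemma monom_ge0 z e : (forall v, 0 <= z v) -> 0 <= monom z e.
Proof. by move=> z0; apply: prodr_ge0. Qed.

Lemma monom_le y w e : (forall v, 0 <= y v <= w v) -> monom y e <= monom w e.
Proof. by move=> yw; apply: ler_prod. Qed.

Lemma monom_scale (c : R) z e : monom (fun v => c * z v) e = c ^+ #|e| * monom z e.
Proof. by rewrite /monom big_split /= prodr_const. Qed.

Lemma monom_bump1 y i t e :
  monom (bump y [set i] t) e = monom y e + (if i \in e then t * monom y (e :\ i) else 0).
Proof.
have bump_out v : v != i -> bump y [set i] t v = y v.
  by rewrite /bump inE => /negbTE ->; rewrite addr0.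
case: ifP => ie; last first.
  rewrite addr0; apply: eq_bigr => v ve; apply: bump_out.
  by apply: contraFN ie => /eqP <-.
rewrite /monom !(big_setD1 i ie) /=.
have -> : \prod_(v in e :\ i) bump y [set i] t v = \prod_(v in e :\ i) y v.
  by apply: eq_bigr => v; rewrite !inE => /andP[/bump_out].
by rewrite {1}/bump inE eqxx mulrDl.
Qed.

Lemma hpoly_bump1 E y i t : hpoly E (bump y [set i] t) = hpoly E y + t * hgrad E i y.
Proof.
rewrite /hpoly /hgrad mulr_sumr (big_mkcond (fun e => i \in e)) -big_split /=.
by apply: eq_bigr => e _; rewrite monom_bump1; case: ifP; rewrite ?mulr0.
Qed.

Lemma hpoly_ge0 E z : (forall v, 0 <= z v) -> 0 <= hpoly E z.
Proof. by move=> z0; apply: sumr_ge0 => e _; apply: monom_ge0. Qed.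

Lemma hpoly_le_norm E z : hpoly E z <= hpoly E (fun v => `|z v|).
Proof. by apply: ler_sum => e _; rewrite /monom -normr_prod ler_norm. Qed.

Lemma hgrad_split E a j z : j != a ->
  hgrad E a z = z j * \sum_(e <- E | (a \in e) && (j \in e)) monom z (e :\ a :\ j)
                + \sum_(e <- E | (a \in e) && (j \notin e)) monom z (e :\ a).
Proof.
move=> ja; rewrite /hgrad (bigID (fun e : {set _} => j \in e)) /= mulr_sumr.
congr (_ + _); apply: eq_bigr => e /andP[ae je].
by rewrite /monom (big_setD1 j) // !inE ja.
Qed.

Lemma hadj_sum_gt0 E a j x : (forall v, 0 < x v) -> hadj E a j ->
  0 < \sum_(e <- E | (a \in e) && (j \in e)) monom x (e :\ a :\ j).
Proof.
move=> x_gt0 /hasP[e0 e0E /andP[ae0 je0]].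
apply: lt_le_trans (_ : 0 < monom x (e0 :\ a :\ j)) _; first exact: prodr_gt0.
have := ler_sum_seq_gap (P := fun e : {set 'I_n} => (a \in e) && (j \in e))
  (F := fun=> 0) (G := fun e => monom x (e :\ a :\ j)) e0E.
rewrite ae0 je0 big1_eq add0r subr0; apply=> // e _.
by apply: monom_ge0 => v; apply: ltW.
Qed.

End Monomials.

Section Compactness.
Variables (R : realType) (n k : nat).
Local Open Scope classical_set_scope.

Lemma continuous_sumr (T : topologicalType) (I : Type) (s : seq I) (P : pred I)
    (F : I -> T -> R) :
  (forall i, continuous (F i)) -> continuous (fun x => \sum_(i <- s | P i) F i x).
Proof.
move=> Fc; elim: s => [|a s IH].
  by under eq_fun do rewrite big_nil; exact: cst_continuous.
under eq_fun do rewrite big_cons; case: (P a) => //.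
by move=> x; apply: continuousD; [exact: Fc | exact: IH].
Qed.

Lemma continuous_prodr (T : topologicalType) (I : Type) (s : seq I) (P : pred I)
    (F : I -> T -> R) :
  (forall i, continuous (F i)) -> continuous (fun x => \prod_(i <- s | P i) F i x).
Proof.
move=> Fc; elim: s => [|a s IH].
  by under eq_fun do rewrite big_nil; exact: cst_continuous.
under eq_fun do rewrite big_cons; case: (P a) => //.
by move=> x; apply: (@continuousM _ _ (F a)); [exact: Fc | exact: IH].
Qed.

Lemma continuous_hpoly (E : hypergraph n) :
  continuous (fun v : 'rV[R]_n => hpoly E (fun i => v ord0 i)).
Proof.
apply: continuous_sumr => e; apply: continuous_prodr => i.
exact: coord_continuous.
Qed.

Lemma exists_sphere_max (f : ('I_n -> R) -> R) : (0 < n)%N -> (0 < k)%N ->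
  continuous (fun v : 'rV[R]_n => f (fun i => v ord0 i)) ->
  exists y : 'I_n -> R, [/\ forall i, 0 <= y i, \sum_i y i ^+ k = 1 &
    forall w, (forall i, 0 <= w i) -> \sum_i w i ^+ k = 1 -> f w <= f y].
Proof.
move=> n0 k0 fc; pose i0 := Ordinal n0.
pose g (v : 'rV[R]_n) := \sum_i v ord0 i ^+ k.
have gc : continuous g.
  apply: continuous_sumr => i.
  have powE (x : R) : x ^+ k = \prod_(j < k) x by rewrite prodr_const card_ord.
  under eq_fun do rewrite powE.
  by apply: continuous_prodr => j; exact: coord_continuous.
pose A := [set v : 'rV[R]_n | forall i, `[0 : R, 1] (v ord0 i)] `&` (g @^-1` [set 1]).
have cA : compact A.
  apply: compact_closedI.
    by apply: (@rV_compact _ _ (fun=> `[0 : R, 1])) => _; exact: segment_compact.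
  by apply: preimage_closed; [move=> x _; exact: gc | exact: closed_eq].
have A0 : A !=set0.
  exists (\row_i (i == i0)%:R); split.
    by move=> i /=; rewrite mxE in_itv /=; case: (i == i0); rewrite /= ?lexx ?ler01.
  rewrite /preimage /g /= (bigD1 i0) //= mxE eqxx expr1n big1 ?addr0 // => i /negbTE.
  by rewrite mxE => ->; rewrite expr0n eqn0Ngt k0.
have [c /[!in_setE] -[cbox cg] cmax] := EVT_max_rV A0 cA (continuous_subspaceT fc).
exists (fun i => c ord0 i); split => [i||w w0 w1]; first by case/andP: (cbox i).
  exact: cg.
have -> : w = (fun i => (\row_j w j) ord0 i) by apply: funext => i; rewrite mxE.
apply: cmax; rewrite in_setE; split => [i /=|]; last first.
  by rewrite /preimage /g /=; under eq_bigr do rewrite mxE.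
rewrite mxE in_itv /= w0 /= leNgt; apply/negP => wi1.
have : w i ^+ k <= 1.
  by rewrite -w1 (bigD1 i) //= lerDl; apply: sumr_ge0 => j _; exact: exprn_ge0.
by rewrite leNgt exprn_egt1 // -lt0n k0.
Qed.

End Compactness.

Section SphereMaximizers.
Variables (R : realType) (n k : nat).
Hypothesis k_gt0 : (0 < k)%N.
Implicit Types (y z w : 'I_n -> R) (f : ('I_n -> R) -> R) (E : hypergraph n).

(* For f homogeneous of degree k, this says that y maximizes f on the
   nonnegative part of the unit k-sphere. *)
Definition is_sphere_max f y :=
  forall w, (forall i, 0 <= w i) -> f w <= f y * \sum_i w i ^+ k.

Lemma exists_root (a : R) : 0 <= a -> exists2 r, 0 <= r & r ^+ k = a.
Proof.
move=> a0; exists (a `^ k%:R^-1); first exact: powR_ge0.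
rewrite -powR_mulrn ?powR_ge0 // -powRrM mulVf ?powRr1 //.
by rewrite pnatr_eq0 -lt0n.
Qed.

Lemma sum_bump y S t :
  \sum_i bump y S t i ^+ k = \sum_i y i ^+ k + \sum_(i in S) ((y i + t) ^+ k - y i ^+ k).
Proof.
rewrite [X in _ + X]big_mkcond -big_split /=; apply: eq_bigr => i _.
by rewrite /bump; case: ifP; rewrite ?addr0 ?subrr // addrC subrK.
Qed.

Lemma sphere_bound_homogeneous f (B : R) :
  (forall c z, f (fun i => c * z i) = c ^+ k * f z) ->
  (forall z, (forall i, 0 <= z i) -> \sum_i z i ^+ k = 1 -> f z <= B) ->
  forall z, (forall i, 0 <= z i) -> f z <= B * \sum_i z i ^+ k.
Proof.
move=> fhom fB z z0; set s := \sum_i z i ^+ k.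
have s0 : 0 <= s by apply: sumr_ge0 => i _; rewrite exprn_ge0.
have [r r0 rk] := exists_root s0.
have [r_eq0|r_neq0] := eqVneq r 0.
  have s_eq0 : s = 0 by rewrite -rk r_eq0 expr0n eqn0Ngt k_gt0.
  have z_eq0 i : z i = 0.
    have : z i ^+ k <= 0.
      by rewrite -s_eq0 /s (bigD1 i) //= lerDl sumr_ge0 // => j _; rewrite exprn_ge0.
    by rewrite le_eqVlt ltNge exprn_ge0 // orbF expf_eq0 k_gt0 => /eqP.
  have -> : z = (fun i => 0 * z i) by apply: funext => i; rewrite mul0r z_eq0.
  by rewrite fhom expr0n eqn0Ngt k_gt0 mul0r s_eq0 mulr0.
have r_gt0 : 0 < r by rewrite lt_def r_neq0.
have w0 i : 0 <= r^-1 * z i by rewrite mulr_ge0 ?invr_ge0.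
have w1 : \sum_i (r^-1 * z i) ^+ k = 1.
  by under eq_bigr do rewrite exprMn; rewrite -mulr_sumr -/s -rk exprVn mulVf // expf_neq0.
have s_gt0 : 0 < s by rewrite -rk exprn_gt0.
by move: (fB _ w0 w1); rewrite fhom exprVn rk mulrC ler_pdivrMr.
Qed.

Lemma hpoly_scale E c z : uniform k E ->
  hpoly E (fun i => c * z i) = c ^+ k * hpoly E z.
Proof.
move/allP=> unifE; rewrite /hpoly mulr_sumr big_seq_cond [RHS]big_seq_cond.
by apply: eq_bigr => e /andP[/unifE /eqP <- _]; rewrite monom_scale.
Qed.

Lemma sphere_max_grad E y i : (forall j, 0 <= y j) -> \sum_j y j ^+ k = 1 ->
  is_sphere_max (hpoly E) y -> 0 < y i ->
  hgrad E i y = k%:R * hpoly E y * y i ^+ k.-1.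
Proof.
move=> y0 y1 ymax yi0; set F := hpoly E y; set G := hgrad E i y.
pose phi t := F * (y i + t) ^+ k - t * G.
have phi_min t : t \in `](- y i), y i[ -> phi 0 <= phi t.
  rewrite in_itv /= => /andP[yt _].
  have w0 v : 0 <= bump y [set i] t v.
    by rewrite /bump inE; case: eqP => [->|_]; [lra | rewrite addr0].
  have := ymax _ w0; rewrite hpoly_bump1 sum_bump big_set1 y1 /phi addr0 mul0r subr0.
  by rewrite mulrDr mulr1 mulrBr -/F -/G; lra.
have dphi (t : R) : is_derive t (1 : R) phi (F * (k%:R * (y i + t) ^+ k.-1) - G).
  have -> : phi = F \*: (cst (y i) + id) ^+ k - G \*: id.
    by apply: funext => s; rewrite /phi /= !fctE /= [s * G]mulrC.
  apply: is_derive_eq; rewrite !fctE /= add0r.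
  by rewrite -[LHS]/(F * (k%:R * (y i + t) ^+ k.-1 * 1) - G * 1) !mulr1.
have drv (t : R) : derivable phi t 1 by case: (dphi t).
have yi_in : 0 \in `](- y i), y i[ by rewrite in_itv /= oppr_lt0 yi0.
have d0 := derive1_at_min (ltW (gt0_cp yi0).2) (fun t _ => drv t) yi_in phi_min.
have := @derive_val _ _ _ _ _ _ _ d0.
rewrite (@derive_val _ _ _ _ _ _ _ (dphi 0)) addr0 => /eqP; rewrite subr_eq0 => /eqP <-.
by rewrite mulrA [F * _]mulrC.
Qed.

Lemma sphere_max_edge_zero E y e u : uniform k E ->
  (forall i, 0 <= y i) -> \sum_i y i ^+ k = 1 -> is_sphere_max (hpoly E) y ->
  e \in E -> u \in e -> y u = 0 -> e \subset [set v | y v == 0].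
Proof.
move=> unifE y0 y1 ymax eE ue yu; set Z := [set v | y v == 0]; apply: contraT => eZ.
set S := e :&: Z; set m := monom y (e :\: Z); set F := hpoly E y.
have ltSk : (#|S| < k)%N.
  move/allP: unifE => /(_ e eE) /eqP <-; apply: proper_card.
  by rewrite properEneq subsetIl andbT; apply: contraNneq eZ => /setIidPl.
have m_gt0 : 0 < m.
  by apply: prodr_gt0 => v; rewrite !inE => /andP[yv _]; rewrite lt_def yv y0.
suff : m <= 0 by rewrite leNgt m_gt0.
apply: (@le_mul_small _ _ (F * #|S|%:R)) => t /andP[t0 t1].
pose w := bump y S t.
have yw v : 0 <= y v <= w v.
  by rewrite y0 /w /bump /=; case: ifP; rewrite ?addr0 // lerDl ltW.
have w0 v : 0 <= w v by case/andP: (yw v) => /le_trans; apply.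
have norm_w : \sum_v w v ^+ k = 1 + #|S|%:R * t ^+ k.
  rewrite sum_bump y1 mulr_natl -sumr_const; congr (_ + _); apply: eq_bigr => v.
  by rewrite !inE => /andP[_ /eqP ->]; rewrite add0r expr0n eqn0Ngt k_gt0 subr0.
have gain : F + t ^+ #|S| * m <= hpoly E w.
  have y_e : monom y e = 0 by rewrite /monom (big_setD1 u ue) /= yu mul0r.
  have w_e : monom w e = t ^+ #|S| * m.
    rewrite /monom (big_setID Z) /= -/S -prodr_const; congr (_ * _).
      by apply: eq_bigr => v; rewrite /w /bump !inE => /andP[-> /eqP ->]; rewrite eqxx add0r.
    rewrite /m; apply: eq_bigr => v.
    by rewrite /w /bump !inE => /andP[/negbTE ->]; rewrite andbF addr0.
  have := ler_sum_seq_gap eE isT (fun e' _ => monom_le e' yw).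
  by rewrite y_e w_e subr0.
have tk : t ^+ k <= t ^+ #|S| * t.
  by rewrite -exprSr; apply: ler_wiXn2l => //; rewrite ltW.
have F0 : 0 <= F * #|S|%:R by rewrite mulr_ge0 // hpoly_ge0.
have : t ^+ #|S| * m <= t ^+ #|S| * (t * (F * #|S|%:R)).
  apply: le_trans (_ : F * #|S|%:R * t ^+ k <= _); last first.
    by rewrite mulrCA mulrA [X in _ <= X]mulrC ler_wpM2l // mulrC.
  by move: (le_trans gain (ymax w w0)); rewrite norm_w mulrDr mulr1 mulrA lerD2l.
by rewrite ler_pM2l ?exprn_gt0.
Qed.

Lemma sphere_max_pos E y : uniform k E -> hconnected E ->
  (forall i, 0 <= y i) -> \sum_i y i ^+ k = 1 -> is_sphere_max (hpoly E) y ->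
  forall i, 0 < y i.
Proof.
move=> unifE connE y0 y1 ymax; set Z := [set v | y v == 0].
have Z_closed : closed (hadj E) Z.
  apply: intro_closed => [|u v /hasP[e eE /andP[ue ve]]]; first exact/sym_connect_sym/hadjC.
  rewrite inE => /eqP yu.
  exact: subsetP (sphere_max_edge_zero unifE y0 y1 ymax eE ue yu) v ve.
have conn u v : connect (hadj E) u v by move/forallP/(_ u)/forallP: connE; apply.
move=> i; rewrite lt_def y0 andbT; apply/negP => /eqP yi.
have y_eq0 v : y v = 0.
  by apply/eqP; have := closed_connect Z_closed (conn i v); rewrite !inE yi eqxx.
move: y1; rewrite big1 => [/eqP|v _]; first by rewrite eq_sym oner_eq0.
by rewrite y_eq0 expr0n eqn0Ngt k_gt0.
Qed.

Theorem hyper_pev_exists E : (0 < n)%N -> uniform k E -> hconnected E ->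
  exists y, is_hyper_pev k E y.
Proof.
move=> n_gt0 unifE connE.
have [y [y0 y1 ymax]] := exists_sphere_max n_gt0 k_gt0 (@continuous_hpoly R n E).
have ysm : is_sphere_max (hpoly E) y.
  by apply: sphere_bound_homogeneous => // c z; exact: hpoly_scale.
have ypos := sphere_max_pos unifE connE y0 y1 ysm.
exists y; split=> //; split=> //; exists (k%:R * hpoly E y); split.
  split=> [|z z1].
    by exists y; split=> //; rewrite -y1; apply: eq_bigr => i _; rewrite ger0_norm.
  rewrite /hform ler_wpM2l // (le_trans (hpoly_le_norm E z)) //.
  by have := ysm _ (fun i => normr_ge0 (z i)); rewrite z1 mulr1.
by move=> i; rewrite [RHS](sphere_max_grad y0 y1 ysm (ypos i)).
Qed.

Lemma hform_le_radius E (rho : R) x : uniform k E -> is_hspectral_radius k E rho ->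
  (forall i, 0 <= x i) -> hform k E x <= rho * \sum_i x i ^+ k.
Proof.
move=> unifE [_ rho_max]; apply: sphere_bound_homogeneous => [c z|z z0 z1].
  by rewrite /hform -/(hpoly E _) (hpoly_scale _ _ unifE) mulrCA.
by apply: rho_max; rewrite -z1; apply: eq_bigr => i _; rewrite ger0_norm.
Qed.

End SphereMaximizers.

Section Shadows.
Variables (R : realType) (n : nat) (E : hypergraph n).
Implicit Types (x z : 'I_n -> R).

Lemma shadow_multC i j : shadow_mult R E i j = shadow_mult R E j i.
Proof.
rewrite /shadow_mult eq_sym; case: eqP => // _.
by congr _%:R; apply: eq_count => e; rewrite andbC.
Qed.

Lemma shadow_pev_exists (F : hypergraph n) : (0 < n)%N -> uniform 2 F -> hconnected F ->
  (forall i z, \sum_j shadow_mult R E i j * z j = hgrad F i z) ->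
  exists z, is_shadow_pev E z.
Proof.
move=> n_gt0 unifF connF EF.
have [z [z_gt0 [z1 [rho [_ eig]]]]] := @hyper_pev_exists R n 2 isT F n_gt0 unifF connF.
by exists z; split=> //; split=> //; exists rho => i; rewrite EF -[RHS]expr1 eig.
Qed.

Lemma shadow_eigenvalue_ge z lam x (L : R) : (0 < n)%N ->
  (forall i, 0 < z i) -> (forall i, \sum_j shadow_mult R E i j * z j = lam * z i) ->
  (forall i, 0 < x i) -> (forall i, L * x i <= \sum_j shadow_mult R E i j * x j) ->
  L <= lam.
Proof.
move=> n_gt0 z_gt0 eig x_gt0 xL.
have S_gt0 : 0 < \sum_i x i * z i.
  rewrite (bigD1 (Ordinal n_gt0)) //= ltr_pwDl ?mulr_gt0 //.
  by apply: sumr_ge0 => i _; rewrite mulr_ge0 // ltW.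
rewrite -(ler_pM2r S_gt0) !mulr_sumr.
under [X in _ <= X]eq_bigr do rewrite mulrCA -eig mulr_sumr.
rewrite exchange_big /=; apply: ler_sum => j _.
rewrite mulrA (le_trans (ler_wpM2r (ltW (z_gt0 j)) (xL j))) // mulr_suml.
by apply: ler_sum => i _; rewrite shadow_multC mulrAC mulrC.
Qed.

Lemma shadow_pev_twins z i j : is_shadow_pev E z ->
  (forall v, shadow_mult R E i v = shadow_mult R E j v) ->
  (exists v, shadow_mult R E i v != 0) -> z i = z j.
Proof.
move=> [z_gt0 [_ [lam eig]]] twins [v Aiv].
have mult_ge0 u w : 0 <= shadow_mult R E u w by rewrite /shadow_mult; case: eqP.
have row_gt0 : 0 < \sum_w shadow_mult R E i w * z w.
  have term_gt0 : 0 < shadow_mult R E i v * z v by rewrite mulr_gt0 // lt_def Aiv mult_ge0.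
  have rest_ge0 : 0 <= \sum_(w | w != v) shadow_mult R E i w * z w.
    by apply: sumr_ge0 => w _; rewrite mulr_ge0 // ltW.
  by rewrite (bigD1 v) //=; lra.
have lam_neq0 : lam != 0 by apply: contraTneq row_gt0 => lam0; rewrite eig lam0 mul0r ltxx.
apply: (mulfI lam_neq0); rewrite -!eig.
by apply: eq_bigr => w _; rewrite twins.
Qed.

End Shadows.

Lemma exists_ratio_bound (R : realType) (n : nat) (x y : 'I_n -> R) : (0 < n)%N ->
  (forall i, 0 < x i) -> (forall i, 0 < y i) ->
  exists m M, [/\ 0 < M, forall i, 0 <= y i <= M * x i & M * x m <= y m].
Proof.
move=> n_gt0 x_gt0 y_gt0.
have [m _ m_max] := @arg_maxP _ _ _ (Ordinal n_gt0) xpredT (fun i => y i / x i) isT.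
exists m, (y m / x m); split; first by rewrite divr_gt0.
  by move=> i; rewrite ltW //= -ler_pdivrMr //; apply: m_max.
by rewrite divfK // gt_eqF.
Qed.

Section RatioBounds.
Variables (R : realType) (n k : nat) (E : hypergraph n).
Variables (x y : 'I_n -> R) (rho L M : R).
Hypotheses (k_gt1 : (1 < k)%N) (unifE : uniform k E).
Hypotheses (x_gt0 : forall i, 0 < x i) (y_le : forall i, 0 <= y i <= M * x i).
Hypotheses (M_gt0 : 0 < M) (L_ge0 : 0 <= L) (L_le : L <= rho).
Hypothesis y_eig : forall i, rho * y i ^+ k.-1 = hgrad E i y.

Lemma sum_monom_le_scaled (P : pred {set 'I_n}) (del : {set 'I_n} -> {set 'I_n}) d :
  (forall e, e \in E -> P e -> #|del e| = d) ->
  \sum_(e <- E | P e) monom y (del e) <= M ^+ d * \sum_(e <- E | P e) monom x (del e).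
Proof.
move=> card_del; rewrite mulr_sumr big_seq_cond [X in _ <= X]big_seq_cond.
apply: ler_sum => e /andP[eE Pe]; rewrite -(card_del e eE Pe) -monom_scale.
by apply: monom_le => v; case/andP: (y_le v).
Qed.

Lemma ratio_lower_bound a j beta gamma : j != a -> hadj E a j ->
  0 <= beta -> M * beta <= y a ->
  gamma * \sum_(e <- E | (a \in e) && (j \in e)) monom x (e :\ a :\ j)
    + \sum_(e <- E | (a \in e) && (j \notin e)) monom x (e :\ a) <= L * beta ^+ k.-1 ->
  M * gamma <= y j.
Proof.
move=> ja adj_aj beta0 May cert.
set Dx := \sum_(e <- E | _) _ in cert; set Rx := \sum_(e <- E | _) _ in cert.
have cardE e : e \in E -> #|e| = k by move/(allP unifE)/eqP.
have y0 i : 0 <= y i by case/andP: (y_le i).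
have Dy_le : \sum_(e <- E | (a \in e) && (j \in e)) monom y (e :\ a :\ j) <= M ^+ k.-2 * Dx.
  apply: sum_monom_le_scaled => e eE /andP[ae je].
  by rewrite -(cardE e eE) (cardsD1 a e) (cardsD1 j (e :\ a)) !inE ja ae je.
have Ry_le : \sum_(e <- E | (a \in e) && (j \notin e)) monom y (e :\ a) <= M ^+ k.-1 * Rx.
  apply: sum_monom_le_scaled => e eE /andP[ae _].
  by rewrite -(cardE e eE) (cardsD1 a e) ae.
have Dx_gt0 : 0 < Dx := hadj_sum_gt0 x_gt0 adj_aj.
have lower : L * (M * beta) ^+ k.-1 <= rho * y a ^+ k.-1.
  apply: ler_pM => //; first by rewrite exprn_ge0 // mulr_ge0 // ltW.
  by rewrite lerXn2r // ?nnegrE // mulr_ge0 // ltW.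
rewrite y_eig (hgrad_split _ _ ja) exprMn in lower.
(* Scaling cert by M^(k-1) and chaining with lower, Dy_le and Ry_le gives
   M^(k-1) (gamma Dx + Rx) <= y_j M^(k-2) Dx + M^(k-1) Rx. *)
have kE : k.-1 = k.-2.+1 by case: (k) k_gt1 => [|[|]].
have MDx_gt0 : 0 < M ^+ k.-2 * Dx by rewrite mulr_gt0 // exprn_gt0.
rewrite -(ler_pM2l MDx_gt0).
have := ler_wpM2l (exprn_ge0 k.-1 (ltW M_gt0)) cert.
have := ler_wpM2l (y0 j) Dy_le.
rewrite kE exprS in lower Ry_le *.
set P := M ^+ k.-2 in Ry_le lower MDx_gt0 *.
nra.
Qed.

Lemma ratio_lt a b gamma : x a < gamma -> M * gamma <= y b -> y a < y b.
Proof.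
move=> xa_lt yb_ge; have /andP[_ ya_le] := y_le a.
by apply: le_lt_trans ya_le (lt_le_trans _ yb_ge); rewrite ltr_pM2l.
Qed.

End RatioBounds.

Lemma opaque_of_rankings (R : realType) (n k : nat) (E : hypergraph n) (a b : 'I_n) :
  (exists y : 'I_n -> R, is_hyper_pev k E y) -> (exists z : 'I_n -> R, is_shadow_pev E z) ->
  (forall y : 'I_n -> R, is_hyper_pev k E y -> y a < y b) ->
  (forall z : 'I_n -> R, is_shadow_pev E z -> z b <= z a) -> opaque R k E.
Proof.
move=> hyp_ex sh_ex hyp_rank sh_rank; split=> //; split=> // y z y_pev z_pev same.
by move: (same b a); rewrite (sh_rank z) // leNgt (hyp_rank y).
Qed.

Lemma ord7P (P : 'I_7 -> Prop) :
  P vt -> P vb -> P vp -> P vq -> P vr -> P vs -> P vu -> forall i, P i.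
Proof.
move=> Pt Pb Pp Pq Pr Ps Pu [[|[|[|[|[|[|[|m]]]]]]] lt_m7] //.
- by rewrite (_ : Ordinal lt_m7 = vt) //; apply: val_inj.
- by rewrite (_ : Ordinal lt_m7 = vb) //; apply: val_inj.
- by rewrite (_ : Ordinal lt_m7 = vp) //; apply: val_inj.
- by rewrite (_ : Ordinal lt_m7 = vq) //; apply: val_inj.
- by rewrite (_ : Ordinal lt_m7 = vr) //; apply: val_inj.
- by rewrite (_ : Ordinal lt_m7 = vs) //; apply: val_inj.
- by rewrite (_ : Ordinal lt_m7 = vu) //; apply: val_inj.
Qed.

Lemma in_set3 (T : finType) (x a b c : T) :
  (x \in [set a; b; c]) = [|| x == a, x == b | x == c].
Proof. by rewrite !inE orbA. Qed.

Section SevenVertices.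
Variable R : realType.

Lemma sum7 (F : 'I_7 -> R) :
  \sum_i F i = F vt + F vb + F vp + F vq + F vr + F vs + F vu.
Proof.
rewrite !big_ord_recr big_ord0 /= add0r.
by congr (_ + _ + _ + _ + _ + _ + _); congr F; apply: val_inj.
Qed.

Lemma prod7 (F : 'I_7 -> R) :
  \prod_i F i = F vt * F vb * F vp * F vq * F vr * F vs * F vu.
Proof.
rewrite !big_ord_recr big_ord0 /= mul1r.
by congr (_ * _ * _ * _ * _ * _ * _); congr F; apply: val_inj.
Qed.

Lemma monom7E (z : 'I_7 -> R) A : monom z A =
  (if vt \in A then z vt else 1) * (if vb \in A then z vb else 1) *
  (if vp \in A then z vp else 1) * (if vq \in A then z vq else 1) *
  (if vr \in A then z vr else 1) * (if vs \in A then z vs else 1) *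
  (if vu \in A then z vu else 1).
Proof. by rewrite /monom big_mkcond prod7. Qed.

End SevenVertices.

(* Evaluates sums and monomials over an explicit edge list.  Memberships are
   decided with in_set2/in_set3 and not with inE, whose matching against
   finset expressions is very slow. *)
Ltac eval_graph := rewrite ?big_cons_if ?big_nil ?in_setD1 ?in_set3 ?in_set2 /=
  ?monom7E ?in_setD1 ?in_set3 ?in_set2 /=.

(* The clique-shadows of O_R and O_B, as lists of pairs with multiplicity. *)
Definition S_R : hypergraph 7 :=
  [:: [set vt; vp]; [set vt; vq]; [set vp; vq]; [set vt; vr]; [set vt; vs];
      [set vr; vs]; [set vb; vq]; [set vb; vr]; [set vq; vr]; [set vb; vp];
      [set vb; vs]; [set vp; vs]; [set vu; vp]; [set vu; vq]; [set vp; vq]].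

Definition S_B : hypergraph 7 :=
  [:: [set vt; vp]; [set vt; vr]; [set vp; vr]; [set vt; vp]; [set vt; vs];
      [set vp; vs]; [set vb; vp]; [set vb; vq]; [set vp; vq]; [set vb; vr];
      [set vb; vs]; [set vr; vs]; [set vu; vp]; [set vu; vq]; [set vp; vq]].

Lemma shadow_O_R (R : realType) i (z : 'I_7 -> R) :
  \sum_j shadow_mult R O_R i j * z j = hgrad S_R i z.
Proof.
by rewrite sum7 /hgrad /S_R /shadow_mult; move: i; apply: ord7P; eval_graph; ring.
Qed.

Lemma shadow_O_B (R : realType) i (z : 'I_7 -> R) :
  \sum_j shadow_mult R O_B i j * z j = hgrad S_B i z.
Proof.
by rewrite sum7 /hgrad /S_B /shadow_mult; move: i; apply: ord7P; eval_graph; ring.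
Qed.

Lemma uniform_O_R : uniform 3 O_R.
Proof. by rewrite /uniform /= -!setUA !cardsU1 !cards1 !inE. Qed.

Lemma uniform_O_B : uniform 3 O_B.
Proof. by rewrite /uniform /= -!setUA !cardsU1 !cards1 !inE. Qed.

Lemma uniform_S_R : uniform 2 S_R.
Proof. by rewrite /uniform /= !cards2. Qed.

Lemma uniform_S_B : uniform 2 S_B.
Proof. by rewrite /uniform /= !cards2. Qed.

Lemma hconnected_O_R : hconnected O_R.
Proof.
apply: (hconnected_star (c := vp)); apply: ord7P;
  try by apply: connect1; rewrite /hadj /= ?in_set3.
by apply: (connect_trans (y := vt)); apply: connect1; rewrite /hadj /= ?in_set3.
Qed.

Lemma hconnected_O_B : hconnected O_B.
Proof.
by apply: (hconnected_star (c := vp)); apply: ord7P; apply: connect1;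
  rewrite /hadj /= ?in_set3.
Qed.

Lemma hconnected_S_R : hconnected S_R.
Proof.
apply: (hconnected_star (c := vp)); apply: ord7P;
  try by apply: connect1; rewrite /hadj /= ?in_set2.
by apply: (connect_trans (y := vt)); apply: connect1; rewrite /hadj /= ?in_set2.
Qed.

Lemma hconnected_S_B : hconnected S_B.
Proof.
by apply: (hconnected_star (c := vp)); apply: ord7P; apply: connect1;
  rewrite /hadj /= ?in_set2.
Qed.

Ltac ratio_step H E xE :=
  apply: (H _ _ _ _ _ _);
  [ by [] | by rewrite /hadj /= ?in_set3 ?in_set2 | by rewrite ?xE ler0n | by []
  | by unfold E; eval_graph; rewrite !xE; clear; lra ].

Section Rankings.
Variable R : realType.

(* Scaled approximate eigenvectors.  All numerals stay below 5000: larger nat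
   numerals are parsed through Nat.of_num_uint, which simplification unfolds. *)
Definition x_R : 'I_7 -> R := fun i => nth 0 [:: 3475; 3449; 4000; 4000; 3358; 3358; 2662] i.
Definition x_B : 'I_7 -> R := fun i => nth 0 [:: 3293; 3085; 4000; 3047; 3141; 3141; 2293] i.
Definition x_S : 'I_7 -> R := fun i => nth 0 [:: 2709; 2388; 4000; 2477; 2429; 2429; 1365] i.

Lemma x_RE : (x_R vt = 3475) * (x_R vb = 3449) * (x_R vp = 4000) * (x_R vq = 4000) *
  (x_R vr = 3358) * (x_R vs = 3358) * (x_R vu = 2662).
Proof. by []. Qed.

Lemma x_BE : (x_B vt = 3293) * (x_B vb = 3085) * (x_B vp = 4000) * (x_B vq = 3047) *
  (x_B vr = 3141) * (x_B vs = 3141) * (x_B vu = 2293).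
Proof. by []. Qed.

Lemma x_SE : (x_S vt = 2709) * (x_S vb = 2388) * (x_S vp = 4000) * (x_S vq = 2477) *
  (x_S vr = 2429) * (x_S vs = 2429) * (x_S vu = 1365).
Proof. by []. Qed.

Lemma O_R_ranking (y : 'I_7 -> R) : is_hyper_pev 3 O_R y -> y vb < y vt.
Proof.
move=> [y_gt0 [_ [rho [rad eig]]]].
have x_gt0 : forall i, 0 < x_R i by apply: ord7P; rewrite !x_RE ltr0n.
have L_le : 1129 / 500 <= rho.
  have S_gt0 : 0 < \sum_i x_R i ^+ 3 by rewrite sum7 !x_RE; lra.
  have := hform_le_radius (isT : (0 < 3)%N) uniform_O_R rad (fun i => ltW (x_gt0 i)).
  rewrite -(ler_pM2r S_gt0); apply: le_trans.
  by rewrite /hform /O_R sum7; eval_graph; rewrite !x_RE; clear; lra.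
have [m [M [M_gt0 y_le lb]]] := exists_ratio_bound (isT : (0 < 7)%N) x_gt0 y_gt0.
have L_ge0 : 0 <= 1129 / 500 :> R by lra.
have step := ratio_lower_bound (isT : (1 < 3)%N) uniform_O_R x_gt0 y_le M_gt0 L_ge0 L_le eig.
move: m lb; apply: ord7P => lb.
- by apply: (ratio_lt y_le M_gt0 _ lb); rewrite !x_RE ltr_nat.
- have yr : M * 3357 <= y vr.
    by ratio_step (step vb vr (x_R vb)) O_R x_RE.
  have yt : M * 3469 <= y vt.
    by ratio_step (step vr vt 3357) O_R x_RE.
  by apply: (ratio_lt y_le M_gt0 _ yt); rewrite !x_RE ltr_nat.
- have yt : M * 3474 <= y vt.
    by ratio_step (step vp vt (x_R vp)) O_R x_RE.
  by apply: (ratio_lt y_le M_gt0 _ yt); rewrite !x_RE ltr_nat.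
- have yt : M * 3474 <= y vt.
    by ratio_step (step vq vt (x_R vq)) O_R x_RE.
  by apply: (ratio_lt y_le M_gt0 _ yt); rewrite !x_RE ltr_nat.
- have yt : M * 3473 <= y vt.
    by ratio_step (step vr vt (x_R vr)) O_R x_RE.
  by apply: (ratio_lt y_le M_gt0 _ yt); rewrite !x_RE ltr_nat.
- have yt : M * 3473 <= y vt.
    by ratio_step (step vs vt (x_R vs)) O_R x_RE.
  by apply: (ratio_lt y_le M_gt0 _ yt); rewrite !x_RE ltr_nat.
- have yp : M * 4000 <= y vp.
    by ratio_step (step vu vp (x_R vu)) O_R x_RE.
  have yt : M * 3474 <= y vt.
    by ratio_step (step vp vt 4000) O_R x_RE.
  by apply: (ratio_lt y_le M_gt0 _ yt); rewrite !x_RE ltr_nat.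
Qed.

Lemma O_B_ranking (y : 'I_7 -> R) : is_hyper_pev 3 O_B y -> y vq < y vr.
Proof.
move=> [y_gt0 [_ [rho [rad eig]]]].
have x_gt0 : forall i, 0 < x_B i by apply: ord7P; rewrite !x_BE ltr0n.
have L_le : 2317 / 1000 <= rho.
  have S_gt0 : 0 < \sum_i x_B i ^+ 3 by rewrite sum7 !x_BE; lra.
  have := hform_le_radius (isT : (0 < 3)%N) uniform_O_B rad (fun i => ltW (x_gt0 i)).
  rewrite -(ler_pM2r S_gt0); apply: le_trans.
  by rewrite /hform /O_B sum7; eval_graph; rewrite !x_BE; clear; lra.
have [m [M [M_gt0 y_le lb]]] := exists_ratio_bound (isT : (0 < 7)%N) x_gt0 y_gt0.
have L_ge0 : 0 <= 2317 / 1000 :> R by lra.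
have step := ratio_lower_bound (isT : (1 < 3)%N) uniform_O_B x_gt0 y_le M_gt0 L_ge0 L_le eig.
move: m lb; apply: ord7P => lb.
- have yr : M * 3140 <= y vr.
    by ratio_step (step vt vr (x_B vt)) O_B x_BE.
  by apply: (ratio_lt y_le M_gt0 _ yr); rewrite !x_BE ltr_nat.
- have yr : M * 3140 <= y vr.
    by ratio_step (step vb vr (x_B vb)) O_B x_BE.
  by apply: (ratio_lt y_le M_gt0 _ yr); rewrite !x_BE ltr_nat.
- have yr : M * 3140 <= y vr.
    by ratio_step (step vp vr (x_B vp)) O_B x_BE.
  by apply: (ratio_lt y_le M_gt0 _ yr); rewrite !x_BE ltr_nat.
- have yp : M * 3999 <= y vp.
    by ratio_step (step vq vp (x_B vq)) O_B x_BE.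
  have yr : M * 3134 <= y vr.
    by ratio_step (step vp vr 3999) O_B x_BE.
  by apply: (ratio_lt y_le M_gt0 _ yr); rewrite !x_BE ltr_nat.
- by apply: (ratio_lt y_le M_gt0 _ lb); rewrite !x_BE ltr_nat.
- have yr : M * 3140 <= y vr.
    by ratio_step (step vs vr (x_B vs)) O_B x_BE.
  by apply: (ratio_lt y_le M_gt0 _ yr); rewrite !x_BE ltr_nat.
- have yp : M * 3998 <= y vp.
    by ratio_step (step vu vp (x_B vu)) O_B x_BE.
  have yr : M * 3129 <= y vr.
    by ratio_step (step vp vr 3998) O_B x_BE.
  by apply: (ratio_lt y_le M_gt0 _ yr); rewrite !x_BE ltr_nat.
Qed.

Lemma O_R_shadow_ranking (z : 'I_7 -> R) : is_shadow_pev O_R z -> z vt = z vb.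
Proof.
move=> z_pev; apply: shadow_pev_twins z_pev _ _.
  by apply: ord7P; rewrite /shadow_mult /= ?in_set3.
by exists vp; rewrite /shadow_mult /= ?in_set3 pnatr_eq0.
Qed.

Lemma O_B_shadow_ranking (z : 'I_7 -> R) : is_shadow_pev O_B z -> z vr < z vq.
Proof.
move=> [z_gt0 [_ [lam eig]]].
have x_gt0 : forall i, 0 < x_S i by apply: ord7P; rewrite !x_SE ltr0n.
have L_le : 593 / 125 <= lam.
  apply: (shadow_eigenvalue_ge (isT : (0 < 7)%N) z_gt0 eig x_gt0) => i.
  rewrite shadow_O_B /hgrad /S_B; move: i; apply: ord7P; eval_graph; rewrite !x_SE; clear; lra.
have [m [M [M_gt0 z_le lb]]] := exists_ratio_bound (isT : (0 < 7)%N) x_gt0 z_gt0.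
have L_ge0 : 0 <= 593 / 125 :> R by lra.
have eig2 i : lam * z i ^+ 2.-1 = hgrad S_B i z by rewrite -shadow_O_B eig expr1.
have step := ratio_lower_bound (isT : (1 < 2)%N) uniform_S_B x_gt0 z_le M_gt0 L_ge0 L_le eig2.
move: m lb; apply: ord7P => lb.
- have zp : M * 3996 <= z vp.
    by ratio_step (step vt vp (x_S vt)) S_B x_SE.
  have zq : M * 2464 <= z vq.
    by ratio_step (step vp vq 3996) S_B x_SE.
  by apply: (ratio_lt z_le M_gt0 _ zq); rewrite !x_SE ltr_nat.
- have zq : M * 2470 <= z vq.
    by ratio_step (step vb vq (x_S vb)) S_B x_SE.
  by apply: (ratio_lt z_le M_gt0 _ zq); rewrite !x_SE ltr_nat.
- have zq : M * 2473 <= z vq.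
    by ratio_step (step vp vq (x_S vp)) S_B x_SE.
  by apply: (ratio_lt z_le M_gt0 _ zq); rewrite !x_SE ltr_nat.
- by apply: (ratio_lt z_le M_gt0 _ lb); rewrite !x_SE ltr_nat.
- have zp : M * 3997 <= z vp.
    by ratio_step (step vr vp (x_S vr)) S_B x_SE.
  have zq : M * 2466 <= z vq.
    by ratio_step (step vp vq 3997) S_B x_SE.
  by apply: (ratio_lt z_le M_gt0 _ zq); rewrite !x_SE ltr_nat.
- have zp : M * 3997 <= z vp.
    by ratio_step (step vs vp (x_S vs)) S_B x_SE.
  have zq : M * 2466 <= z vq.
    by ratio_step (step vp vq 3997) S_B x_SE.
  by apply: (ratio_lt z_le M_gt0 _ zq); rewrite !x_SE ltr_nat.
- have zq : M * 2475 <= z vq.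
    by ratio_step (step vu vq (x_S vu)) S_B x_SE.
  by apply: (ratio_lt z_le M_gt0 _ zq); rewrite !x_SE ltr_nat.
Qed.

End Rankings.

Theorem theorem5p1 (R : realType) :
  opaque R 3 O_R /\ opaque R 3 O_B.
Proof.
split.
- apply: (opaque_of_rankings (a := vb) (b := vt)).
  + by apply: hyper_pev_exists; [| | exact: uniform_O_R | exact: hconnected_O_R].
  + by apply: (shadow_pev_exists (F := S_R)); [| exact: uniform_S_R | exact: hconnected_S_R
                                           | exact: shadow_O_R].
  + exact: O_R_ranking.
  + by move=> z /O_R_shadow_ranking ->.
- apply: (opaque_of_rankings (a := vq) (b := vr)).
  + by apply: hyper_pev_exists; [| | exact: uniform_O_B | exact: hconnected_O_B].
  + by apply: (shadow_pev_exists (F := S_B)); [| exact: uniform_S_B | exact: hconnected_S_B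
                                           | exact: shadow_O_B].
  + exact: O_B_ranking.
  + by move=> z /O_B_shadow_ranking /ltW.
Qed.
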